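(* Let $F\in\mathbf F$ satisfy either (i) $\mathbf{NA^r}$, or (ii) both $\mathbf{NA^s}$ and $\mathbf{EF}$. Then $F$ satisfies $\mathbf{KP}$.
   Context: Fix $T\in\mathbb N$, $\mathbb T=\{0,\dots,T\}$, $d\ge1$, a complete probability space $(\Omega,\mathcal F,\mathbb P)$ and a filtration $\mathbb H=(\mathcal H_t)_{t\in\mathbb T}$ with $\mathcal H_T\subset\mathcal F$ (no other relation between $\mathbb H$ and the other processes is assumed). Equalities and inequalities between random variables are understood $\mathbb P$-a.s. $\mathbb M^d$ denotes the real $d\times d$ matrices. For $E\subset\mathbb M^d$ (or $E\subset\mathbb R^d$) and a $\sigma$-algebra $\mathcal G\subset\mathcal F$, $L^0(E;\mathcal G)$ is the set of $E$-valued $\mathcal G$-measurable random variables. A closed convex cone $\mathcal A\subset\mathbb M^d$ is fixed; $\mathbb L^0(\mathcal A;\mathbb H)$ denotes the set of $\mathcal A$-valued $\mathbb H$-adapted processes $(\eta_t)_{t\in\mathbb T}$. $\mathbb F$ is the set of continuous maps $f:\mathbb M^d\to\mathbb R^d$ such that (HF1) $f(\lambda a)=\lambda f(a)$ for all $\lambda\ge0$, $a\in\mathbb M^d$; (HF2) $f(\lambda a+\beta a')-(\lambda f(a)+\beta f(a'))\in\mathbb R^d_+$ for all $\lambda,\beta\ge0$, $a,a'\in\mathcal A$. $\mathbf F$ is the set of sequences $F=(F_t)_{t\in\mathbb T}$ of $\mathcal F$-measurable random maps $F_t:\Omega\times\mathbb M^d\to\mathbb R^d$ with $F_t(\omega,\cdot)\in\mathbb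 F$ for a.e. $\omega$ (no adaptedness to $\mathbb H$ is assumed); for a random matrix $\eta$, $F_t(\eta)(\omega)=F_t(\omega,\eta(\omega))$. $N_t(F)=\{F_t(\eta):\eta\in L^0(\mathcal A;\mathcal H_t)\}$, $N^0_t(F)=N_t(F)\cap(-N_t(F))$. For a process $\xi=(\xi_t)_{t\in\mathbb T}$, ''$\xi\in N(F)$'' means $\xi_t\in N_t(F)$ for all $t$, and ''$\xi\in N^0(F)$'' means $\xi_t\in N^0_t(F)$ for all $t$. $V_t(\xi)=\sum_{s=0}^t\xi_s$ and $A_t(F)=\{V_t(\xi)-r:\ \xi\in N(F),\ r\in L^0(\mathbb R^d_+;\mathcal F)\}$. Condition $\mathbf{KP}$: for all $\xi,\tilde\xi\in N(F)$, $V_T(\xi)+V_T(\tilde\xi)\in L^0(\mathbb R^d_+;\mathcal F)$ implies $\xi\in N^0(F)$ and $V_T(\xi)+V_T(\tilde\xi)=0$. Condition $\mathbf{NA^w}$ (for an element $G\in\mathbf F$): $A_T(G)\cap L^0(\mathbb R^d_+;\mathcal F)=\{0\}$. Condition $\mathbf{NA^s}$: $A_t(F)\cap\big(-N_t(F)+L^0(\mathbb R^d_+;\mathcal F)\big)\subset N^0_t(F)$ for all $t\in\mathbb T$. Condition $\mathbf{EF}$: $N^0_t(F)=\{0\}$ for all $t\in\mathbb T$. Condition $\mathbf{NA^r}$: there exists $G\in\mathbf F$ such that for all $\eta\in\mathbb L^0(\mathcal A;\mathbb H)$, $t\in\mathbb T$ and $i\le d$: (1) $G^i_t(\eta_t)\ge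 F^i_t(\eta_t)$; (2) if $F_t(\eta_t)\notin N^0_t(F)$ then the event $\{\exists k\le d: G^k_t(\eta_t)>F^k_t(\eta_t)\}$ has positive probability; (3) $\mathbf{NA^w}$ holds for $G$. *)

From HB Require Import structures.
From mathcomp Require Import all_boot all_order all_algebra.
From mathcomp Require Import all_classical all_reals all_analysis.
Set Implicit Arguments. Unset Strict Implicit. Unset Printing Implicit Defensive.
Import Order.TTheory GRing.Theory Num.Theory.
Import numFieldNormedType.Exports.
Local Open Scope classical_set_scope.
Local Open Scope ring_scope.

Section Defs.
Context (R : realType) (d : measure_display) (Omega : measurableType d)
  (P : probability Omega R) (n : nat).

Notation vec := 'rV[R]_n.
Notation mat := 'M[R]_n.

Definition closed_convex_cone (A : set mat) : Prop :=
  closed A /\ A 0 /\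
  (forall (l : R) a, 0 <= l -> A a -> A (l *: a)) /\
  (forall a b, A a -> A b -> A (a + b)).

Definition vec_nonneg (v : vec) : Prop := forall i, 0 <= v 0 i.

Definition in_FF (A : set mat) (f : mat -> vec) : Prop :=
  continuous f /\
  (forall (l : R) a, 0 <= l -> f (l *: a) = l *: f a) /\
  (forall (l b : R) a a', 0 <= l -> 0 <= b -> A a -> A a' ->
     vec_nonneg (f (l *: a + b *: a') - (l *: f a + b *: f a'))).

Definition meas_wrt (G : set (set Omega)) (X : Omega -> R) : Prop :=
  forall B : set R, measurable B -> G (X @^-1` B).

Definition mat_meas (G : set (set Omega)) (X : Omega -> mat) : Prop :=
  forall i j, meas_wrt G (fun w => X w i j).
Definition vec_meas (G : set (set Omega)) (X : Omega -> vec) : Prop :=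
  forall i, meas_wrt G (fun w => X w 0 i).

Definition ase {T} (X Y : Omega -> T) : Prop := {ae P, forall w, X w = Y w}.

(* X belongs to L^0(E; G) (random variables are identified up to a.s. equality) *)
Definition inL0m (E : set mat) (G : set (set Omega)) (X : Omega -> mat) : Prop :=
  exists Y, mat_meas G Y /\ (forall w, E (Y w)) /\ ase X Y.
Definition inL0v (E : set vec) (G : set (set Omega)) (X : Omega -> vec) : Prop :=
  exists Y, vec_meas G Y /\ (forall w, E (Y w)) /\ ase X Y.

Definition L0plus (X : Omega -> vec) : Prop :=
  inL0v vec_nonneg measurable X.

Definition filtration (T : nat) (H : nat -> set (set Omega)) : Prop :=
  (forall t, (t <= T)%N -> sigma_algebra setT (H t)) /\
  (forall s t, (s <= t)%N -> (t <= T)%N -> H s `<=` H t) /\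
  H T `<=` measurable.

Definition random_map := nat -> Omega -> mat -> vec.

Definition in_bfF (T : nat) (A : set mat) (F : random_map) : Prop :=
  forall t, (t <= T)%N ->
    (forall a i, meas_wrt measurable (fun w => F t w a 0 i)) /\
    {ae P, forall w, in_FF A (F t w)}.

Definition app (F : random_map) (t : nat) (eta : Omega -> mat) : Omega -> vec :=
  fun w => F t w (eta w).

Section Cond.
Context (T : nat) (A : set mat) (H : nat -> set (set Omega)).

Definition inN (F : random_map) (t : nat) (X : Omega -> vec) : Prop :=
  exists eta, inL0m A (H t) eta /\ ase X (app F t eta).

Definition inN0 (F : random_map) (t : nat) (X : Omega -> vec) : Prop :=
  inN F t X /\ inN F t (fun w => - X w).

Definition procN (F : random_map) (xi : nat -> Omega -> vec) : Prop :=
  forall t, (t <= T)%N -> inN F t (xi t).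
Definition procN0 (F : random_map) (xi : nat -> Omega -> vec) : Prop :=
  forall t, (t <= T)%N -> inN0 F t (xi t).

Definition V (xi : nat -> Omega -> vec) (t : nat) : Omega -> vec :=
  fun w => \sum_(s < t.+1) xi s w.

Definition inAt (F : random_map) (t : nat) (X : Omega -> vec) : Prop :=
  exists xi r, procN F xi /\ L0plus r /\ ase X (fun w => V xi t w - r w).

Definition KP (F : random_map) : Prop :=
  forall xi xi', procN F xi -> procN F xi' ->
    L0plus (fun w => V xi T w + V xi' T w) ->
    procN0 F xi /\ ase (fun w => V xi T w + V xi' T w) (fun=> 0).

Definition NAw (G : random_map) : Prop :=
  forall X, (inAt G T X /\ L0plus X) <-> ase X (fun=> 0).

Definition NAs (F : random_map) : Prop :=
  forall t, (t <= T)%N -> forall X,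
    inAt F t X ->
    (exists xi r, inN F t xi /\ L0plus r /\ ase X (fun w => - xi w + r w)) ->
    inN0 F t X.

Definition EF (F : random_map) : Prop :=
  forall t, (t <= T)%N -> forall X, inN0 F t X <-> ase X (fun=> 0).

Definition adaptedA (eta : nat -> Omega -> mat) : Prop :=
  forall t, (t <= T)%N -> inL0m A (H t) (eta t).

Definition NAr (F : random_map) : Prop :=
  exists G, in_bfF T A G /\
    (forall eta, adaptedA eta -> forall t, (t <= T)%N ->
       (forall i, {ae P, forall w, F t w (eta t w) 0 i <= G t w (eta t w) 0 i}) /\
       (~ inN0 F t (app F t (eta t)) ->
          (0%:E < P [set w | exists k, (F t w (eta t w) ord0 k < G t w (eta t w) ord0 k)%R])%E)) /\
    NAw G.
End Cond.
End Defs.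

(* Case (ii).  At the last date the three sums [V_T xi + V_T xi' - xi'_T],
   [V_T xi + V_T xi' - xi_T] and [V_T xi + V_T xi' - xi_T - xi'_T] are
   dominated, by superadditivity of [F], by single [N(F)]-processes, so they
   lie in [A_T(F)]; each is also in [-N_T(F) + L0_+], hence in
   [N^0_T(F) = {0}].  This forces [xi_T = xi'_T = 0] and [V_T = 0], and
   backward induction reaches the earlier dates.
   Case (i).  Replacing the positions [eta_t], [eta'_t] of [xi_t], [xi'_t] by
   the single position [eta_t + eta'_t] traded through [G] yields a wealth in
   [A_T(G)] that exceeds [V_T xi + V_T xi' >= 0] by a sum of nonnegative gaps
   (superadditivity of [G] and [G >= F]).  By [NA^w] it vanishes, so all gaps
   vanish, [G_t(eta_t) = F_t(eta_t)] a.s., and condition (2) of [NA^r] puts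
   [xi_t] in [N^0_t(F)].
   Measurability of [w |-> F_t(w, eta w)] is Caratheodory's argument:
   approximate [eta] by countably-valued maps into the rational matrices. *)

From HB Require Import structures.
From mathcomp Require Import all_boot all_order all_algebra.
From mathcomp Require Import all_classical all_reals all_analysis.
From mathcomp Require Import ring lra measurable_realfun.
Import Order.TTheory GRing.Theory Num.Theory.
Import numFieldNormedType.Exports.
Local Open Scope classical_set_scope.
Local Open Scope ring_scope.
Set Implicit Arguments. Unset Strict Implicit. Unset Printing Implicit Defensive.

Section RationalApproximation.
Context (R : realType) (n : nat).

Definition ratmx (m : nat) : 'M[R]_n :=
  map_mx ratr (odflt 0 (unpickle m : option 'M[rat]_n)).

Lemma ratmx_dense (x : 'M[R]_n) (e : R) : 0 < e ->
  exists m, forall i j, `|ratmx m i j - x i j| < e.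
Proof.
move=> e0.
have near_rat (ij : 'I_n * 'I_n) : exists q : rat,
    ratr q \in `](x ij.1 ij.2 - e), (x ij.1 ij.2 + e)[.
  by apply: rat_in_itvoo; rewrite ltrBlDr -addrA ltrDl addr_gt0.
have [q hq] := choice near_rat.
exists (pickle (\matrix_(i, j) q (i, j) : 'M[rat]_n)) => i j.
rewrite /ratmx pickleK /= !mxE.
have := hq (i, j); rewrite in_itv /= => /andP[h1 h2].
by rewrite ltr_norml; apply/andP; split; lra.
Qed.

Definition ratmx_near (e : R) (x : 'M[R]_n) (m : nat) : bool :=
  [forall ij : 'I_n * 'I_n, `|ratmx m ij.1 ij.2 - x ij.1 ij.2| < e].

Lemma ratmx_near_exists (k : nat) (x : 'M[R]_n) :
  exists m, ratmx_near k.+1%:R^-1 x m.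
Proof.
have [|m hm] := ratmx_dense x (_ : 0 < k.+1%:R^-1); first by rewrite invr_gt0.
by exists m; apply/forallP => -[i j]; exact: hm.
Qed.

(* Taking the FIRST index of the enumeration that is close to [x] makes
   [w |-> approx k (eta w)] a countably-valued measurable map. *)
Definition approx_index (k : nat) (x : 'M[R]_n) : nat :=
  ex_minn (ratmx_near_exists k x).

Definition approx (k : nat) (x : 'M[R]_n) : 'M[R]_n := ratmx (approx_index k x).

Lemma approx_indexP k x : ratmx_near k.+1%:R^-1 x (approx_index k x).
Proof. by rewrite /approx_index; case: ex_minnP. Qed.

Lemma approx_indexE k x m : approx_index k x = m <->
  ratmx_near k.+1%:R^-1 x m /\
  forall j, (j < m)%N -> ~~ ratmx_near k.+1%:R^-1 x j.
Proof.
rewrite /approx_index; case: ex_minnP => m0 near0 min0; split.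
  move=> <-; split => // j jm; apply/negP => /min0.
  by rewrite leqNgt jm.
move=> [nearm minm]; apply/eqP; rewrite eqn_leq min0 // leqNgt.
by apply/negP => /minm; rewrite near0.
Qed.

Lemma approx_cvg (x : 'M[R]_n) : approx^~ x @ \oo --> x.
Proof.
apply/cvg_ballP => e e0.
have [N eN] : exists N : nat, N.+1%:R^-1 < e.
  exists (Num.truncn e^-1); rewrite -[X in _ < X](invrK e).
  by rewrite ltf_pV2 ?posrE ?ltr0n ?invr_gt0 //; exact: truncnS_gt.
exists N => // k /= Nk; split => // i j.
have := forallP (approx_indexP k x) (i, j) => /= near_ij.
rewrite /ball /= distrC (lt_le_trans near_ij) // (le_trans _ (ltW eN)) //.
by rewrite lef_pV2 ?posrE ?ltr0n // ler_nat.
Qed.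

End RationalApproximation.

Section Caratheodory.
Context (R : realType) (d : measure_display) (Omega : measurableType d) (n : nat).
Variable f : Omega -> 'M[R]_n -> 'rV[R]_n.
Hypothesis f_meas : forall a i, measurable_fun setT (fun w => f w a 0 i).
Variable eta : Omega -> 'M[R]_n.
Hypothesis eta_meas : forall i j, measurable_fun setT (fun w => eta w i j).

Lemma measurable_ratmx_near k m :
  measurable [set w | ratmx_near k.+1%:R^-1 (eta w) m].
Proof.
have -> : [set w | ratmx_near k.+1%:R^-1 (eta w) m] =
  \bigcap_(ij in setT) ((fun w => eta w ij.1 ij.2) @^-1`
      ball (ratmx R n m ij.1 ij.2) k.+1%:R^-1).
  apply/seteqP; split => w /=.
    by move=> /forallP near_w ij _; have := near_w ij; rewrite /ball.
  by move=> near_w; apply/forallP => ij; have := near_w ij I; rewrite /ball.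
apply: fin_bigcap_measurable; first exact: finite_finset.
move=> [i j] _; rewrite -(setTI (_ @^-1` _)).
exact: (eta_meas i j measurableT (measurable_ball _ _)).
Qed.

Lemma measurable_approx_index k m : measurable [set w | approx_index k (eta w) = m].
Proof.
have -> : [set w | approx_index k (eta w) = m] =
  [set w | ratmx_near k.+1%:R^-1 (eta w) m] `&`
  \bigcap_(j in `I_m) ~` [set w | ratmx_near k.+1%:R^-1 (eta w) j].
  apply/seteqP; split => w /=.
    by move=> /approx_indexE [h1 h2]; split => // j /= jm; apply/negP; exact: h2.
  by move=> [h1 h2]; apply/approx_indexE; split => // j jm; apply/negP; exact: h2.
apply: measurableI; first exact: measurable_ratmx_near.
apply: fin_bigcap_measurable; first exact: finite_II.
by move=> j _; apply: measurableC; exact: measurable_ratmx_near.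
Qed.

Lemma measurable_fun_approx k i :
  measurable_fun setT (fun w => f w (approx k (eta w)) 0 i).
Proof.
move=> _ B mB; rewrite setTI.
have -> : (fun w => f w (approx k (eta w)) 0 i) @^-1` B =
  \bigcup_m ([set w | approx_index k (eta w) = m] `&`
             ((fun w => f w (ratmx R n m) 0 i) @^-1` B)).
  apply/seteqP; split => w /=; first by exists (approx_index k (eta w)).
  by move=> [m _ [<-]].
apply: bigcupT_measurable => m; apply: measurableI.
  exact: measurable_approx_index.
by rewrite -(setTI (_ @^-1` _)); exact: f_meas.
Qed.

Lemma measurable_fun_caratheodory (N : set Omega) i :
  (forall w, ~ N w -> continuous (f w)) -> measurable (~` N) ->
  measurable_fun (~` N) (fun w => f w (eta w) 0 i).
Proof.
move=> f_cont mN; apply: (measurable_fun_cvg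
  (h := fun k w => f w (approx k (eta w)) 0 i)).
  by move=> k; apply: measurable_funS (measurable_fun_approx k i).
move=> w /= Nw; have fw_cont : f w @ eta w --> f w (eta w) by exact: f_cont.
have /cvg_ballP f_cvg := cvg_comp _ _ (@approx_cvg R n (eta w)) fw_cont.
by apply/cvg_ballP => e e0; apply: filterS (f_cvg e e0) => k [].
Qed.

End Caratheodory.

Section AlmostSure.
Context (R : realType) (d : measure_display) (Omega : measurableType d)
  (P : probability Omega R) (n : nat).
Local Notation vec := 'rV[R]_n.
Local Notation ase := (ase P).

Lemma ase_refl {U} (X : Omega -> U) : ase X X.
Proof. exact: aeW. Qed.

Lemma ase_trans {U} (X Y Z : Omega -> U) : ase X Y -> ase Y Z -> ase X Z.
Proof. by move=> XY YZ; apply: filterS2 XY YZ => w -> ->. Qed.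

Lemma ase_pw {U} (X Y : Omega -> U) : (forall w, X w = Y w) -> ase X Y.
Proof. exact: aeW. Qed.

Lemma ae_forall_ltn (Q : nat -> Omega -> Prop) m :
  (forall s, (s < m)%N -> {ae P, forall w, Q s w}) ->
  {ae P, forall w, forall s, (s < m)%N -> Q s w}.
Proof.
elim: m => [|m IH] Qae; first by apply: aeW.
have := IH (fun s sm => Qae s (ltnW sm)).
apply: filterS2 (Qae m (ltnSn m)) => w Qm Qlt s.
by rewrite ltnS leq_eqVlt => /orP[/eqP -> //|]; exact: Qlt.
Qed.

Lemma ae_forall_ord m (Q : 'I_m -> Omega -> Prop) :
  (forall s, {ae P, forall w, Q s w}) -> {ae P, forall w, forall s, Q s w}.
Proof.
move=> Qae.
have Qltn s : (s < m)%N -> {ae P, forall w, forall sm : (s < m)%N, Q (Ordinal sm) w}.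
  move=> sm; apply: filterS (Qae (Ordinal sm)) => w Qw sm'.
  by rewrite (_ : Ordinal sm' = Ordinal sm) //; exact: val_inj.
have := @ae_forall_ltn (fun s w => forall sm : (s < m)%N, Q (Ordinal sm) w) m Qltn.
by apply: filterS => w Qw [s sm]; exact: Qw.
Qed.

Lemma meas_wrtE (f : Omega -> R) : meas_wrt measurable f <-> measurable_fun setT f.
Proof.
split=> [f_meas _ B mB|f_meas B mB]; first by rewrite setTI; exact: f_meas.
by rewrite -(setTI (f @^-1` B)); exact: f_meas.
Qed.

Lemma meas_wrt_sigma (G : set (set Omega)) (f : Omega -> R) :
  sigma_algebra setT G ->
  meas_wrt G f <-> measurable_fun setT (f : g_sigma_algebraType G -> R).
Proof.
move=> sG; have GE : G.-sigma.-measurable = G by exact: measurable_g_measurableTypeE.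
split=> [f_meas _ B mB|f_meas B mB]; first by rewrite setTI GE; exact: f_meas.
by have := f_meas measurableT B mB; rewrite setTI GE.
Qed.

Definition vec_aemeas (X : Omega -> vec) : Prop :=
  exists Y, vec_meas measurable Y /\ ase X Y.

Lemma vec_aemeas_ase (X X' : Omega -> vec) : ase X X' -> vec_aemeas X' -> vec_aemeas X.
Proof. by move=> XX' [Y [mY X'Y]]; exists Y; split => //; exact: ase_trans XX' X'Y. Qed.

Lemma vec_aemeas_cst (v : vec) : vec_aemeas (fun=> v).
Proof.
exists (fun=> v); split; last exact: ase_refl.
by move=> i; apply/meas_wrtE; exact: measurable_cst.
Qed.

Lemma vec_aemeasD (X Y : Omega -> vec) :
  vec_aemeas X -> vec_aemeas Y -> vec_aemeas (fun w => X w + Y w).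
Proof.
move=> [X' [mX XX']] [Y' [mY YY']]; exists (fun w => X' w + Y' w); split.
  move=> i; apply/meas_wrtE.
  rewrite (_ : (fun w => _) = (fun w => X' w 0 i + Y' w 0 i)); last first.
    by apply: funext => w; rewrite mxE.
  by apply: measurable_funD; apply/meas_wrtE.
by apply: filterS2 XX' YY' => w -> ->.
Qed.

Lemma vec_aemeasZ (c : R) (X : Omega -> vec) :
  vec_aemeas X -> vec_aemeas (fun w => c *: X w).
Proof.
move=> [X' [mX XX']]; exists (fun w => c *: X' w); split.
  move=> i; apply/meas_wrtE.
  rewrite (_ : (fun w => _) = (fun w => c * X' w 0 i)); last first.
    by apply: funext => w; rewrite mxE.
  by apply: measurable_funM; [exact: measurable_cst|apply/meas_wrtE].
by apply: filterS XX' => w ->.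
Qed.

Lemma vec_aemeasN (X : Omega -> vec) : vec_aemeas X -> vec_aemeas (fun w => - X w).
Proof.
move=> [X' [mX XX']]; exists (fun w => - X' w); split.
  move=> i; apply/meas_wrtE.
  rewrite (_ : (fun w => _) = (fun w => - X' w 0 i)); last first.
    by apply: funext => w; rewrite mxE.
  by apply: measurableT_comp => //; apply/meas_wrtE.
by apply: filterS XX' => w ->.
Qed.

Lemma vec_aemeasB (X Y : Omega -> vec) :
  vec_aemeas X -> vec_aemeas Y -> vec_aemeas (fun w => X w - Y w).
Proof. by move=> mX mY; apply: vec_aemeasD => //; exact: vec_aemeasN. Qed.

Lemma vec_aemeas_sum m (X : nat -> Omega -> vec) :
  (forall s, (s < m)%N -> vec_aemeas (X s)) ->
  vec_aemeas (fun w => \sum_(s < m) X s w).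
Proof.
elim: m => [|m IH] mX.
  by apply: (vec_aemeas_ase _ (vec_aemeas_cst 0)); apply: ase_pw => w; rewrite big_ord0.
apply: (vec_aemeas_ase _ (vec_aemeasD (IH (fun s sm => mX s (ltnW sm)))
  (mX m (ltnSn m)))).
by apply: ase_pw => w; rewrite big_ord_recr.
Qed.

Lemma L0plusP (X : Omega -> vec) :
  L0plus P X <-> vec_aemeas X /\ {ae P, forall w, vec_nonneg (X w)}.
Proof.
split=> [[Y [mY [Ypos XY]]]|[[Y [mY XY]] Xpos]].
  by split; [exists Y | apply: filterS XY => w ->].
exists (fun w => \row_i Num.max (Y w 0 i) 0); split; [|split].
- move=> i; apply/meas_wrtE.
  rewrite (_ : (fun w => _) = (fun w => Num.max (Y w 0 i) 0)); last first.
    by apply: funext => w; rewrite mxE.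
  by apply: measurable_maxr; [apply/meas_wrtE|exact: measurable_cst].
- by move=> w i; rewrite mxE le_max lexx orbT.
- apply: filterS2 XY Xpos => w XYw Xw; rewrite XYw; apply/rowP => i.
  by rewrite mxE; apply/esym/max_idPl; rewrite -XYw; exact: Xw.
Qed.

Lemma L0plus_ase (X X' : Omega -> vec) : ase X X' -> L0plus P X' -> L0plus P X.
Proof.
move=> XX' /L0plusP[mX' X'pos]; apply/L0plusP.
by split; [exact: vec_aemeas_ase mX' | apply: filterS2 XX' X'pos => w ->].
Qed.

Lemma L0plus0 : L0plus P (fun=> 0 : vec).
Proof.
apply/L0plusP; split; first exact: vec_aemeas_cst.
by apply: aeW => w i; rewrite mxE.
Qed.

Lemma L0plusD (X Y : Omega -> vec) :
  L0plus P X -> L0plus P Y -> L0plus P (fun w => X w + Y w).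
Proof.
move=> /L0plusP[mX Xpos] /L0plusP[mY Ypos]; apply/L0plusP.
split; first exact: vec_aemeasD.
by apply: filterS2 Xpos Ypos => w Xw Yw i; rewrite mxE addr_ge0.
Qed.

End AlmostSure.

Lemma VS (R : realType) (d : measure_display) (Omega : measurableType d) (n : nat)
    (xi : nat -> Omega -> 'rV[R]_n) t w :
  V xi t.+1 w = V xi t w + xi t.+1 w.
Proof. by rewrite /V big_ord_recr. Qed.

Section Model.
Context (R : realType) (d : measure_display) (Omega : measurableType d)
  (P : probability Omega R) (n : nat).
Local Notation vec := 'rV[R]_n.
Local Notation mat := 'M[R]_n.
Local Notation ase := (ase P).
Context (T : nat) (A : set mat) (H : nat -> set (set Omega)).
Hypothesis hA : closed_convex_cone A.
Hypothesis hH : filtration T H.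

Lemma cone_comb (l b : R) a a' :
  0 <= l -> 0 <= b -> A a -> A a' -> A (l *: a + b *: a').
Proof. by case: hA => _ [_ [AZ AD]] l0 b0 Aa Aa'; apply: AD; exact: AZ. Qed.

Lemma mat_meas_filtration s (Y : Omega -> mat) :
  (s <= T)%N -> mat_meas (H s) Y -> mat_meas measurable Y.
Proof.
case: hH => _ [Hmono HT] sT mY i j B mB.
by apply/HT/(Hmono s T) => //; exact: mY.
Qed.

Lemma mat_meas_comb s (l b : R) (Y Y' : Omega -> mat) : (s <= T)%N ->
  mat_meas (H s) Y -> mat_meas (H s) Y' ->
  mat_meas (H s) (fun w => l *: Y w + b *: Y' w).
Proof.
case: hH => Hsigma _ sT mY mY' i j; apply/meas_wrt_sigma; first exact: Hsigma.
rewrite (_ : (fun w => _) = (fun w => l * Y w i j + b * Y' w i j)); last first.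
  by apply: funext => w; rewrite !mxE.
by apply: measurable_funD; apply: measurable_funM => //;
  apply/meas_wrt_sigma; by [exact: Hsigma | exact: mY | exact: mY'].
Qed.

Lemma vec_aemeas_app (G : random_map R Omega n) t (eta : Omega -> mat) :
  in_bfF P T A G -> (t <= T)%N -> mat_meas measurable eta ->
  vec_aemeas P (app G t eta).
Proof.
move=> hG tT m_eta; have [G_meas [N [mN PN0 NG]]] := hG t tT.
pose Y w := if w \in N then 0 else G t w (eta w).
exists Y; split; last first.
  exists N; split => // w /= YG; apply: contrapT => Nw; apply: YG.
  by rewrite /app /Y ifF //; apply/negP; rewrite inE.
have G_cont w : ~ N w -> continuous (G t w).
  by move=> Nw; apply: contrapT => Gw; apply: Nw; apply: NG => -[].
move=> i; apply/meas_wrtE; rewrite -(setUv N).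
apply/measurable_funU => //; first exact: measurableC.
split.
  apply: (eq_measurable_fun (cst (0 : R))); last exact: measurable_cst.
  by move=> w; rewrite inE /Y => Nw; rewrite ifT ?inE // mxE.
apply: (eq_measurable_fun (fun w => G t w (eta w) 0 i)).
  by move=> w; rewrite inE /Y => Nw; rewrite ifF //; apply/negP; rewrite inE.
apply: measurable_fun_caratheodory => //; last exact: measurableC.
- by move=> a j; apply/meas_wrtE; exact: G_meas.
- by move=> j k; apply/meas_wrtE; exact: m_eta.
Qed.

Definition represents (G : random_map R Omega n) (s : nat) (X : Omega -> vec)
    (Y : Omega -> mat) : Prop :=
  [/\ mat_meas (H s) Y, forall w, A (Y w) & ase X (app G s Y)].

Lemma inN_represents (G : random_map R Omega n) s (X : Omega -> vec) :
  inN P A H G s X -> exists Y, represents G s X Y.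
Proof.
move=> [eta [[Y [mY [AY etaY]]] X_eta]]; exists Y; split => //.
by apply: filterS2 X_eta etaY => w -> /=; rewrite /app => ->.
Qed.

Lemma procN_represents (G : random_map R Omega n) xi : procN P T A H G xi ->
  exists Y, forall s, (s <= T)%N -> represents G s (xi s) (Y s).
Proof.
move=> xiN.
have rep s : exists Y, (s <= T)%N -> represents G s (xi s) Y.
  case: (leqP s T) => sT; last by exists (fun=> 0).
  by have [Y ?] := inN_represents (xiN s sT); exists Y.
by have [Y ?] := choice rep; exists Y.
Qed.

Lemma inN0_ase (G : random_map R Omega n) s (X X' : Omega -> vec) :
  ase X X' -> inN0 P A H G s X' -> inN0 P A H G s X.
Proof.
move=> XX' [[eta [eta_A X'eta]] [eta' [eta'_A X'eta']]]; split.
  by exists eta; split => //; exact: ase_trans XX' X'eta.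
exists eta'; split => //; apply: ase_trans X'eta'.
by apply: filterS XX' => w ->.
Qed.

Lemma represents_adapted (G : random_map R Omega n) xi Y :
  (forall s, (s <= T)%N -> represents G s (xi s) (Y s)) -> adaptedA P T A H Y.
Proof.
move=> repY s sT; have [mY AY _] := repY s sT.
by exists (Y s); split => //; split => //; exact: ase_refl.
Qed.

Lemma represents_aemeas (G : random_map R Omega n) s X Y :
  in_bfF P T A G -> (s <= T)%N -> represents G s X Y -> vec_aemeas P X.
Proof.
move=> hG sT [mY _ XY]; apply: vec_aemeas_ase XY _.
exact: vec_aemeas_app hG sT (mat_meas_filtration sT mY).
Qed.

Lemma inN_app_comb (G G' : random_map R Omega n) s (l b : R) X X' Y Y' :
  (s <= T)%N -> 0 <= l -> 0 <= b ->
  represents G' s X Y -> represents G' s X' Y' ->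
  inN P A H G s (app G s (fun w => l *: Y w + b *: Y' w)).
Proof.
move=> sT l0 b0 [mY AY _] [mY' AY' _].
exists (fun w => l *: Y w + b *: Y' w); split; last exact: ase_refl.
exists (fun w => l *: Y w + b *: Y' w); split; first exact: mat_meas_comb.
by split; [move=> w; exact: cone_comb | exact: ase_refl].
Qed.

Lemma app_superadd (G : random_map R Omega n) s (l b : R) (Y Y' : Omega -> mat) :
  in_bfF P T A G -> (s <= T)%N -> (forall w, A (Y w)) -> (forall w, A (Y' w)) ->
  0 <= l -> 0 <= b ->
  {ae P, forall w, vec_nonneg (G s w (l *: Y w + b *: Y' w) -
     (l *: G s w (Y w) + b *: G s w (Y' w)))}.
Proof.
move=> hG sT AY AY' l0 b0; have [_ G_FF] := hG s sT.
by apply: filterS G_FF => w [_ [_ superadd]]; exact: superadd.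
Qed.

Lemma vec_aemeas_V (G : random_map R Omega n) xi t :
  in_bfF P T A G -> (t <= T)%N -> procN P T A H G xi -> vec_aemeas P (V xi t).
Proof.
move=> hG tT xiN; have [Y repY] := procN_represents xiN.
apply: vec_aemeas_sum => s st; have sT : (s <= T)%N := @leq_trans t s T st tT.
exact: represents_aemeas hG sT (repY s sT).
Qed.

Lemma inAt_ase (G : random_map R Omega n) t (X X' : Omega -> vec) :
  ase X X' -> inAt P T A H G t X' -> inAt P T A H G t X.
Proof.
move=> XX' [zeta [r [zetaN [r0 X'e]]]]; exists zeta, r; split => //; split => //.
exact: ase_trans XX' X'e.
Qed.

Lemma inAt_le (G : random_map R Omega n) t zeta (Z : Omega -> vec) :
  in_bfF P T A G -> (t <= T)%N -> procN P T A H G zeta -> vec_aemeas P Z ->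
  {ae P, forall w, vec_nonneg (V zeta t w - Z w)} -> inAt P T A H G t Z.
Proof.
move=> hG tT zetaN mZ Zle; exists zeta, (fun w => V zeta t w - Z w).
split => //; split; last by apply: ase_pw => w; rewrite subKr.
by apply/L0plusP; split => //; exact: vec_aemeasB (vec_aemeas_V hG tT zetaN) mZ.
Qed.

Lemma inAt_comb (F : random_map R Omega n) t xi xi' (c c' : nat -> R) :
  in_bfF P T A F -> (t <= T)%N -> (forall s, 0 <= c s) -> (forall s, 0 <= c' s) ->
  procN P T A H F xi -> procN P T A H F xi' ->
  inAt P T A H F t (fun w => \sum_(s < t.+1) (c s *: xi s w + c' s *: xi' s w)).
Proof.
move=> hF tT c0 c'0 xiN xi'N.
have [Y repY] := procN_represents xiN; have [Y' repY'] := procN_represents xi'N.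
pose zeta s := app F s (fun w => c s *: Y s w + c' s *: Y' s w).
have zetaN : procN P T A H F zeta.
  by move=> s sT; exact: inN_app_comb sT (c0 s) (c'0 s) (repY s sT) (repY' s sT).
apply: (inAt_le hF tT zetaN).
  apply: (vec_aemeas_sum (X := fun s w => c s *: xi s w + c' s *: xi' s w)).
  move=> s st; have sT : (s <= T)%N := @leq_trans t s T st tT.
  apply: vec_aemeasD; apply: vec_aemeasZ.
    exact: represents_aemeas hF sT (repY s sT).
  exact: represents_aemeas hF sT (repY' s sT).
have : {ae P, forall w, forall s, (s < t.+1)%N ->
    vec_nonneg (zeta s w - (c s *: xi s w + c' s *: xi' s w))}.
  apply: ae_forall_ltn => s st; have sT : (s <= T)%N := @leq_trans t s T st tT.
  have [_ AY xiY] := repY s sT; have [_ AY' xi'Y'] := repY' s sT.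
  have := app_superadd hF sT AY AY' (c0 s) (c'0 s).
  by apply: filterS3 xiY xi'Y' => w -> ->.
apply: filterS => w zeta_ge i.
rewrite /V -sumrB summxE; apply: sumr_ge0 => s _; exact: zeta_ge s (ltn_ord s) i.
Qed.

End Model.

Lemma sum_scale_last (K : comNzRingType) m t (a b : nat -> 'rV[K]_m) (ca cb : K) :
  \sum_(s < t.+1) ((if (s < t)%N then 1 else ca) *: a s +
                   (if (s < t)%N then 1 else cb) *: b s) =
  \sum_(s < t.+1) a s + \sum_(s < t.+1) b s - (1 - ca) *: a t - (1 - cb) *: b t.
Proof.
rewrite !big_ord_recr /= ltnn.
rewrite (eq_bigr (fun s : 'I_t => a s + b s)); last first.
  by move=> s _; rewrite ltn_ord !scale1r.
by rewrite big_split /=; apply/rowP => j; rewrite !(mxE, summxE); ring.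
Qed.

Lemma sub_last_terms_eq0 (M : zmodType) (u a b : M) :
  u - b = 0 -> u - a = 0 -> u - a - b = 0 -> [/\ a = 0, b = 0 & u = 0].
Proof.
move=> /subr0_eq ub /subr0_eq ua; rewrite ua subrr sub0r => /eqP.
rewrite oppr_eq0 => /eqP b0; have a0 : a = 0 by rewrite -ua ub.
by rewrite a0 b0.
Qed.

Section NAsEF.
Context (R : realType) (d : measure_display) (Omega : measurableType d)
  (P : probability Omega R) (n : nat).
Local Notation vec := 'rV[R]_n.
Local Notation ase := (ase P).
Context (T : nat) (A : set 'M[R]_n) (H : nat -> set (set Omega)).
Hypothesis hA : closed_convex_cone A.
Hypothesis hH : filtration T H.
Variable F : random_map R Omega n.
Hypothesis hF : in_bfF P T A F.
Hypothesis hNAs : NAs P T A H F.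
Hypothesis hEF : EF P T A H F.

Lemma NAs_EF_eq0 t (X xi0 r : Omega -> vec) :
  (t <= T)%N -> inAt P T A H F t X -> inN P A H F t xi0 -> L0plus P r ->
  ase X (fun w => - xi0 w + r w) -> ase X (fun=> 0).
Proof.
move=> tT XA xi0N r0 Xe; apply/(hEF tT X); apply: (hNAs tT XA).
by exists xi0, r.
Qed.

Lemma inN_superadd t (X X' : Omega -> vec) :
  (t <= T)%N -> inN P A H F t X -> inN P A H F t X' ->
  exists Z, inN P A H F t Z /\ L0plus P (fun w => Z w - X w - X' w).
Proof.
move=> tT XN X'N.
have [Y repY] := inN_represents XN; have [Y' repY'] := inN_represents X'N.
have [mY AY XY] := repY; have [mY' AY' X'Y'] := repY'.
pose Z := app F t (fun w => 1 *: Y w + 1 *: Y' w).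
exists Z; split; first exact: inN_app_comb tT ler01 ler01 repY repY'.
apply/L0plusP; split.
  apply: vec_aemeasB; first apply: vec_aemeasB.
  - apply: (vec_aemeas_app hF tT).
    exact: (mat_meas_filtration hH tT (mat_meas_comb hH 1 1 tT mY mY')).
  - exact: (represents_aemeas hH hF tT repY).
  - exact: (represents_aemeas hH hF tT repY').
have := app_superadd hF tT AY AY' ler01 ler01.
apply: filterS3 XY X'Y' => w -> ->.
by rewrite /Z /app !scale1r opprD addrA.
Qed.

Lemma NAs_EF_drop_last t xi xi' : (t <= T)%N ->
  procN P T A H F xi -> procN P T A H F xi' ->
  L0plus P (fun w => V xi t w + V xi' t w) ->
  ase (fun w => V xi t w + V xi' t w - xi' t w) (fun=> 0).
Proof.
move=> tT xiN xi'N S0.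
have c1 s : 0 <= (if (s < t)%N then 1 else 1 : R) by case: ifP.
have c0 s : 0 <= (if (s < t)%N then 1 else 0 : R) by case: ifP.
apply: (NAs_EF_eq0 tT _ (xi'N t tT) S0); last first.
  by apply: ase_pw => w; rewrite addrC.
apply: inAt_ase (inAt_comb hA hH hF tT c1 c0 xiN xi'N).
apply: ase_pw => w; rewrite (sum_scale_last _ (fun s => xi s w) (fun s => xi' s w)).
by rewrite subrr subr0 scale0r scale1r subr0.
Qed.

Lemma NAs_EF_drop_both t xi xi' : (t <= T)%N ->
  procN P T A H F xi -> procN P T A H F xi' ->
  L0plus P (fun w => V xi t w + V xi' t w) ->
  ase (fun w => V xi t w + V xi' t w - xi t w - xi' t w) (fun=> 0).
Proof.
move=> tT xiN xi'N S0.
have c0 s : 0 <= (if (s < t)%N then 1 else 0 : R) by case: ifP.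
have [Z [ZN gap0]] := inN_superadd tT (xiN t tT) (xi'N t tT).
apply: (NAs_EF_eq0 tT _ ZN (L0plusD S0 gap0)).
  apply: inAt_ase (inAt_comb hA hH hF tT c0 c0 xiN xi'N).
  apply: ase_pw => w; rewrite (sum_scale_last _ (fun s => xi s w) (fun s => xi' s w)).
  by rewrite subr0 !scale1r.
by apply: ase_pw => w; apply/rowP => j; rewrite !mxE; ring.
Qed.

Lemma NAs_EF_last_eq0 t xi xi' : (t <= T)%N ->
  procN P T A H F xi -> procN P T A H F xi' ->
  L0plus P (fun w => V xi t w + V xi' t w) ->
  [/\ ase (xi t) (fun=> 0), ase (xi' t) (fun=> 0) &
      ase (fun w => V xi t w + V xi' t w) (fun=> 0)].
Proof.
move=> tT xiN xi'N S0.
have S0' : L0plus P (fun w => V xi' t w + V xi t w).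
  by apply: L0plus_ase S0; apply: ase_pw => w; rewrite addrC.
have drop' := NAs_EF_drop_last tT xiN xi'N S0.
have drop := NAs_EF_drop_last tT xi'N xiN S0'.
have drop2 := NAs_EF_drop_both tT xiN xi'N S0.
have last0 : {ae P, forall w, [/\ xi t w = 0, xi' t w = 0 &
    V xi t w + V xi' t w = 0]}.
  apply: filterS3 drop' drop drop2 => w /= e' e e2.
  by apply: sub_last_terms_eq0 e' _ e2; rewrite [V xi t w + _]addrC.
by split; apply: filterS last0 => w [].
Qed.

Lemma NAs_EF_prefix_eq0 xi xi' :
  procN P T A H F xi -> procN P T A H F xi' -> forall t, (t <= T)%N ->
  L0plus P (fun w => V xi t w + V xi' t w) ->
  forall s, (s <= t)%N -> ase (xi s) (fun=> 0) /\ ase (xi' s) (fun=> 0).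
Proof.
move=> xiN xi'N; elim=> [|t IH] tT S0 s st.
  have [xi0 xi'0 _] := NAs_EF_last_eq0 tT xiN xi'N S0.
  by move: st; rewrite leqn0 => /eqP ->.
have [xi0 xi'0 St0] := NAs_EF_last_eq0 tT xiN xi'N S0.
move: st; rewrite leq_eqVlt => /orP[/eqP -> //|]; rewrite ltnS => st.
apply: IH (ltnW tT) _ s st; apply: (L0plus_ase _ (L0plus0 P n)).
apply: filterS3 xi0 xi'0 St0 => w xi0w xi'0w.
by rewrite !VS xi0w xi'0w !addr0.
Qed.

Lemma NAs_EF_KP : KP P T A H F.
Proof.
move=> xi xi' xiN xi'N S0; split.
  move=> t tT; apply/(hEF tT).
  exact: (NAs_EF_prefix_eq0 xiN xi'N (leqnn T) S0 tT).1.
by have [] := NAs_EF_last_eq0 (leqnn T) xiN xi'N S0.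
Qed.

End NAsEF.

Lemma addr_psumr_eq0 (K : numDomainType) m (a : K) (g : 'I_m -> K) :
  0 <= a -> (forall s, 0 <= g s) -> a + \sum_s g s = 0 ->
  a = 0 /\ forall s, g s = 0.
Proof.
move=> a0 g0; have sum0 : 0 <= \sum_s g s by exact: sumr_ge0.
move/eqP; rewrite paddr_eq0 // => /andP[/eqP a_eq0 /eqP sum_eq0].
by split => // s; move: sum_eq0 => /psumr_eq0P; apply.
Qed.

Section NAr.
Context (R : realType) (d : measure_display) (Omega : measurableType d)
  (P : probability Omega R) (n : nat).
Local Notation vec := 'rV[R]_n.
Local Notation mat := 'M[R]_n.
Local Notation ase := (ase P).
Context (T : nat) (A : set mat) (H : nat -> set (set Omega)).
Hypothesis hA : closed_convex_cone A.
Hypothesis hH : filtration T H.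
Hypothesis P_complete : measure_is_complete P.
Variable F : random_map R Omega n.

Section Gap.
Variable G : random_map R Omega n.
Hypothesis hG : in_bfF P T A G.
Hypothesis hGF : forall eta, adaptedA P T A H eta -> forall t, (t <= T)%N ->
  (forall i, {ae P, forall w, F t w (eta t w) 0 i <= G t w (eta t w) 0 i}) /\
  (~ inN0 P A H F t (app F t (eta t)) ->
     (0%:E < P [set w | exists k,
       (F t w (eta t w) ord0 k < G t w (eta t w) ord0 k)%R])%E).
Hypothesis hNAw : NAw P T A H G.

Variables (xi xi' : nat -> Omega -> vec) (Y Y' : nat -> Omega -> mat).
Hypothesis repY : forall s, (s <= T)%N -> represents P A H F s (xi s) (Y s).
Hypothesis repY' : forall s, (s <= T)%N -> represents P A H F s (xi' s) (Y' s).
Hypothesis S0 : L0plus P (fun w => V xi T w + V xi' T w).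

Let zeta s := app G s (fun w => 1 *: Y s w + 1 *: Y' s w).
Let gap s w := zeta s w - xi s w - xi' s w.

Lemma V_zeta_gap w :
  V zeta T w = (V xi T w + V xi' T w) + \sum_(s < T.+1) gap s w.
Proof. by rewrite /V /gap !sumrB; apply/rowP => j; rewrite !mxE; ring. Qed.

Lemma gap_ge : {ae P, forall w, forall s, (s < T.+1)%N -> forall i,
  0 <= G s w (Y s w) 0 i - F s w (Y s w) 0 i <= gap s w 0 i}.
Proof.
apply: ae_forall_ltn => s; rewrite ltnS => sT.
have [_ AY xiY] := repY sT; have [_ AY' xi'Y'] := repY' sT.
have dom := ae_forall_ord ((hGF (represents_adapted repY) sT).1).
have dom' := ae_forall_ord ((hGF (represents_adapted repY') sT).1).
have xis : {ae P, forall w, xi s w = F s w (Y s w) /\ xi' s w = F s w (Y' s w)}.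
  by apply: filterS2 xiY xi'Y' => w; split.
have doms : {ae P, forall w, forall i,
    F s w (Y s w) 0 i <= G s w (Y s w) 0 i /\
    F s w (Y' s w) 0 i <= G s w (Y' s w) 0 i}.
  by apply: filterS2 dom dom' => w FG FG' i; split.
have := app_superadd hG sT AY AY' ler01 ler01.
apply: filterS3 xis doms => w [xiw xi'w] domw sup i.
have [FG FG'] := domw i; have := sup i.
by rewrite /gap /zeta /app xiw xi'w !scale1r !mxE; lra.
Qed.

Lemma zeta_procN : procN P T A H G zeta.
Proof. by move=> s sT; exact: inN_app_comb sT ler01 ler01 (repY sT) (repY' sT). Qed.

Lemma V_zeta_eq0 : ase (V zeta T) (fun=> 0).
Proof.
apply/hNAw; split.
  exists zeta, (fun=> 0); split; first exact: zeta_procN.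
  by split; [exact: L0plus0 | apply: ase_pw => w; rewrite subr0].
apply/L0plusP; split; first exact: vec_aemeas_V hG (leqnn T) zeta_procN.
have [_ Spos] := (L0plusP _ _).1 S0.
apply: filterS2 gap_ge Spos => w ge Sw i; rewrite V_zeta_gap mxE summxE.
apply: addr_ge0; first exact: Sw.
by apply: sumr_ge0 => s _; have /andP[/le_trans] := ge s (ltn_ord s) i; apply.
Qed.

Lemma NAr_tight : {ae P, forall w, V xi T w + V xi' T w = 0 /\
  forall s, (s < T.+1)%N -> forall i, G s w (Y s w) 0 i = F s w (Y s w) 0 i}.
Proof.
have [_ Spos] := (L0plusP _ _).1 S0.
apply: filterS3 gap_ge V_zeta_eq0 Spos => w /= ge Vz Sw.
have tight i : (V xi T w + V xi' T w) 0 i = 0 /\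
    forall s : 'I_T.+1, gap s w 0 i = 0.
  apply: addr_psumr_eq0 (Sw i) _ _ => [s|].
    by have /andP[/le_trans] := ge s (ltn_ord s) i; apply.
  move/rowP/(_ i): Vz; rewrite V_zeta_gap [_ 0 i]mxE summxE => ->.
  by rewrite mxE.
split; first by apply/rowP => i; rewrite (tight i).1 mxE.
move=> s sT i; have /andP[GF0 GFgap] := ge s sT i.
apply/eqP; rewrite -subr_eq0 eq_le GF0 andbT.
by move: GFgap; rewrite ((tight i).2 (Ordinal sT)).
Qed.

Lemma NAr_KP_represents :
  procN0 P T A H F xi /\ ase (fun w => V xi T w + V xi' T w) (fun=> 0).
Proof.
split; last by apply: filterS NAr_tight => w [].
move=> t tT; apply: contrapT => not_N0.
have [_ _ xiY] := repY tT.
have /(hGF (represents_adapted repY) tT).2 : ~ inN0 P A H F t (app F t (Y t)).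
  by move=> N0; apply: not_N0; exact: inN0_ase xiY N0.
set B := [set w | _]; have B_null : P.-negligible B.
  apply: negligibleS NAr_tight => w /= [k GFk] [_ GF].
  by move: GFk; rewrite GF ?ltxx.
by rewrite ((negligibleP P (P_complete B_null)).1 B_null) ltxx.
Qed.

End Gap.

Lemma NAr_KP : NAr P T A H F -> KP P T A H F.
Proof.
move=> [G [hG [hGF hNAw]]] xi xi' xiN xi'N S0.
have [Y repY] := procN_represents xiN; have [Y' repY'] := procN_represents xi'N.
exact: (NAr_KP_represents hG hGF hNAw repY repY' S0).
Qed.

End NAr.

Unset Implicit Arguments.

Theorem mainTheorem6 (R : realType) (d : measure_display) (Omega : measurableType d)
  (P : probability Omega R) (n : nat) (T : nat)
  (A : set 'M[R]_n) (H : nat -> set (set Omega)) (F : random_map R Omega n) :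
  (0 < n)%N ->
  measure_is_complete P ->
  closed_convex_cone A ->
  filtration T H ->
  in_bfF P T A F ->
  (NAr P T A H F \/ (NAs P T A H F /\ EF P T A H F)) ->
  KP P T A H F.
Proof.
move=> _ P_complete hA hH hF [NAr_F | [NAs_F EF_F]].
- exact: (NAr_KP hA hH P_complete NAr_F).
- exact: (NAs_EF_KP hA hH hF NAs_F EF_F).
Qed.
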